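(* Let $q\ge2$, $n\ge1$, $P=3\lceil\log_q n+\log_q\log_q n\rceil+1$, and let $p$ be the smallest prime with $p>4n$. Let $d_1\in[0,2q-2]$, $d_2\in[0,p-1]$, $d_3\in[0,\lfloor\frac{(q-1)(P-1)}{3}\rfloor]$, and let $\mathcal{C}^2_{Aux}$ be the set of $\boldsymbol{x}\in\mathcal{ALL}(n,\frac{P-1}{3})$ such that $\mathrm{VT}^{(0)}(\boldsymbol{x})\equiv d_1\pmod{2q-1}$, $\mathrm{VT}^{(2)}(\boldsymbol{x})\equiv d_2\pmod p$, and $\mathrm{VT}^{(0)}(\mathcal{O}(\boldsymbol{x}))\equiv d_3\pmod{\lfloor\frac{(q-1)(P-1)}{3}\rfloor+1}$. Then for any distinct $\boldsymbol{x},\boldsymbol{y}\in\mathcal{C}^2_{Aux}$ with $d_H(\mathcal{R}(\boldsymbol{x}),\mathcal{R}(\boldsymbol{y}))=4$, there do NOT exist $\boldsymbol{u},\boldsymbol{w}\in\Sigma_q^{\ge0}$, $\boldsymbol{v}\in\Sigma_q^{\ge1}$, integers $t_1,t_2\ge1$ and symbols $a_1,b_1,a_2,b_2\in\Sigma_q$ with $a_1\ne b_1$, $a_2\ne b_2$, such that $\boldsymbol{x}=(\boldsymbol{u},\boldsymbol{\alpha}_{t_1}(a_1b_1),\boldsymbol{v},\boldsymbol{\alpha}_{t_2}(a_2b_2),\boldsymbol{w})$ and $\boldsymbol{y}=(\boldsymbol{u},\boldsymbol{\alpha}_{t_1}(b_1a_1),\boldsymbol{v},\boldsymbol{\alpha}_{t_2}(b_2a_2),\boldsymbol{w})$.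 Moreover, there exists a choice of $d_1,d_2,d_3$ such that $r(\mathcal{C}^2_{Aux})\le\log_qn+\log_q\log_qn+O(1)$ as $n\to\infty$.
   Context: $\Sigma_q=\{0,\dots,q-1\}$; $\Sigma_q^{\ge0}$ (resp. $\Sigma_q^{\ge1}$) is the set of finite (resp. nonempty finite) sequences over $\Sigma_q$; $(\cdot,\cdot)$ is concatenation. For $\boldsymbol{x}\in\Sigma_q^n$, $x[i]$ is its $i$-th entry, with $x[i]=0$ for $i\notin[1,n]$. $\mathrm{VT}^{(k)}(\boldsymbol{z})=\sum_i i^kz[i]$. $\mathcal{O}(\boldsymbol{x})=(x[1],x[3],\dots,x[2\lceil n/2\rceil-1])$ is the odd sequence. For distinct $a,b$, $\boldsymbol{\alpha}_t(ab)$ is the alternating sequence $abab\cdots$ of length $t$; a sequence is alternating if it has such a form. $\mathcal{ALL}(n,L)$ is the set of $\boldsymbol{x}\in\Sigma_q^n$ all of whose alternating substrings (contiguous blocks) have length at most $L$. $\mathcal{R}(\boldsymbol{x})$ is the length-$(n+1)$ vector whose $i$-th entry is the multiset $\{\{x[i-1],x[i]\}\}$; $d_H$ is Hamming distance. Redundancy: $r(\mathcal{C})=n-\log_q|\mathcal{C}|$. *)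

From Stdlib Require Import Reals ZArith.
From mathcomp Require Import all_boot.
Set Implicit Arguments. Unset Strict Implicit. Unset Printing Implicit Defensive.

Definition qary (q : nat) (x : seq nat) : bool := all (fun a => a < q) x.

Definition VT (k : nat) (z : seq nat) : nat :=
  \sum_(i < size z) (i.+1) ^ k * nth 0 z i.

(* odd sequence O(x) = (x[1], x[3], ..., x[2 ceil(n/2) - 1]) (1-indexed) *)
Definition oddseq (x : seq nat) : seq nat :=
  [seq nth 0 x (2 * i) | i <- iota 0 (uphalf (size x))].

Definition alpha (t a b : nat) : seq nat :=
  mkseq (fun i => if odd i then b else a) t.

Definition is_alt (q : nat) (s : seq nat) : bool :=
  has (fun a => has (fun b => (a != b) && (s == alpha (size s) a b)) (iota 0 q))
      (iota 0 q).

Definition inALL (q n L : nat) (x : seq nat) : bool :=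
  [&& size x == n, qary q x &
   all (fun i => all (fun j => is_alt q (drop i (take j x)) ==> (j - i <= L))
                     (iota 0 (size x).+1))
       (iota 0 (size x).+1)].

(* extended entry x[j] (1-indexed), with x[j] = 0 outside [1, n] *)
Definition xe (x : seq nat) (j : nat) : nat :=
  if j is j'.+1 then nth 0 x j' else 0.

(* a multiset {{a, b}} represented canonically as (min, max) *)
Definition mset2 (a b : nat) : nat * nat := (minn a b, maxn a b).

Definition Rvec (x : seq nat) : seq (nat * nat) :=
  mkseq (fun i => mset2 (xe x i) (xe x i.+1)) (size x).+1.

Definition dH (T : eqType) (s t : seq T) : nat :=
  count (fun p => p.1 != p.2) (zip s t) + (maxn (size s) (size t) - minn (size s) (size t)).

Definition least_prime_gt (m p : nat) : Prop :=
  [/\ prime p, m < p & forall p', prime p' -> m < p' -> p <= p'].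

Definition logq (q : nat) (x : R) : R := Rdiv (ln x) (ln (INR q)).
Definition ceilZ (x : R) : Z := Z.opp (Int_part (Ropp x)).

(* (P - 1)/3 = ceil(log_q n + log_q log_q n), with P = 3 ceil(...) + 1 *)
Definition Lpar (q n : nat) : nat :=
  Z.to_nat (ceilZ (Rplus (logq q (INR n)) (logq q (logq q (INR n))))).

Definition inC2Aux (q n p d1 d2 d3 : nat) (x : seq nat) : bool :=
  [&& inALL q n (Lpar q n) x,
      VT 0 x == d1 %[mod (2 * q - 1)],
      VT 2 x == d2 %[mod p] &
      VT 0 (oddseq x) == d3 %[mod ((q - 1) * Lpar q n).+1]].

Fixpoint words (q n : nat) : seq (seq nat) :=
  if n is m.+1 then [seq a :: w | a <- iota 0 q, w <- words q m] else [:: [::]].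

Definition cardC2Aux (q n p d1 d2 d3 : nat) : nat :=
  size (filter (inC2Aux q n p d1 d2 d3) (words q n)).

Definition redundancy (q n card : nat) : R := Rminus (INR n) (logq q (INR card)).

(* If x and y differ by flipping the alternating blocks alpha_t1(a1 b1) and
   alpha_t2(a2 b2), then for every weight f the difference of sum_i f(i) x[i] and
   sum_i f(i) y[i] is (a1 - b1) A1 + (a2 - b2) A2, where Aj is the alternating sum of
   f over the j-th block; for the weights 1, [i odd] and i^2 these sums have closed
   forms. The moduli 2q - 1 and (q - 1) L + 1 exceed the sizes of the first two
   differences, so both vanish: the blocks have lengths of the same parity, and the
   weight [i odd] then ties (a2 - b2) and the second length to (a1 - b1) and the first.
   What is left of the VT^(2) difference is a product of nonzero integers smaller
   than the prime p, hence not divisible by p.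

   For the redundancy, a word outside ALL(n, L) has an alternating window of length
   L + 1 starting at one of n - L positions, and a window is alternating for at most
   q^2 of its fillings; since q^L >= 2nq, at least half of all words lie in ALL(n, L).
   By pigeonhole some residue triple keeps a 1 / ((2q - 1) p ((q - 1) L + 1)) share
   of them, and Erdos' bound on the central binomial coefficient gives p <= 18n, so
   the redundancy is at most log_q n + log_q log_q n + log_q (360 q^2). *)

From Stdlib Require Import Reals ZArith Lra.
From mathcomp Require Import all_boot all_algebra zify.
From mathcomp Require ring.
Set Implicit Arguments. Unset Strict Implicit. Unset Printing Implicit Defensive.
Import GRing.Theory Num.Theory.

(** * Alternating sums over flipped blocks *)

Lemma size_alpha t a b : size (alpha t a b) = t.
Proof. exact: size_mkseq. Qed.

Definition wsum (f : nat -> nat) (z : seq nat) : nat :=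
  \sum_(i < size z) f i * nth 0 z i.

Lemma wsum_cat f s t : wsum f (s ++ t) = wsum f s + wsum (fun i => f (size s + i)) t.
Proof.
rewrite /wsum size_cat big_split_ord /=; congr (_ + _); apply: eq_bigr => i _.
- by rewrite nth_cat ltn_ord.
- by rewrite nth_cat ltnNge leq_addr addKn.
Qed.

Lemma sum_even_index (F : nat -> nat) n :
  \sum_(i < n) ~~ odd i * F i = \sum_(i < uphalf n) F i.*2.
Proof.
elim: n => [|n IHn]; first by rewrite !big_ord0.
rewrite big_ord_recr IHn /= uphalf_half; case: (boolP (odd n)) => [odd_n | even_n].
  by rewrite mul0n addn0.
rewrite mul1n big_ord_recr; congr (_ + F _).
by rewrite -[in LHS](odd_double_half n) (negbTE even_n).
Qed.

Lemma VT_oddseq z : VT 0 (oddseq z) = wsum (fun i => ~~ odd i) z.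
Proof.
rewrite /VT /wsum sum_even_index size_map size_iota; apply: eq_bigr => i _.
by rewrite expn0 mul1n (nth_map 0) ?nth_iota ?size_iota // -mul2n.
Qed.

Section AlternatingSums.
Import ring.
Local Open Scope ring_scope.

Definition altsum (f : nat -> nat) (t : nat) : int := \sum_(k < t) (-1) ^+ k * (f k)%:Z.

Lemma altsumS f t : altsum f t.+1 = altsum f t + (-1) ^+ t * (f t)%:Z.
Proof. exact: big_ord_recr. Qed.

Lemma altsum_odd f j : altsum f (2 * j).+1 = altsum f (2 * j) + (f (2 * j)%N)%:Z.
Proof. by rewrite altsumS -signr_odd oddM mul1r. Qed.

Lemma altsum_double f j :
  altsum f (2 * j.+1) = altsum f (2 * j) + (f (2 * j)%N)%:Z - (f (2 * j).+1)%:Z.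
Proof.
by rewrite mulnS add2n altsumS altsum_odd -signr_odd /= oddM /=; ring.
Qed.

Lemma wsum_alpha_sub f t a b :
  (wsum f (alpha t a b))%:Z - (wsum f (alpha t b a))%:Z = (a%:Z - b%:Z) * altsum f t.
Proof.
rewrite /wsum /altsum !size_alpha -!natz !natr_sum -sumrB mulr_sumr.
apply: eq_bigr => k _; rewrite /alpha !nth_mkseq // -signr_odd !natrM !natz.
by case: (odd k); ring.
Qed.

Lemma wsum_flips_sub f u v w t1 t2 a1 b1 a2 b2 :
  (wsum f (u ++ alpha t1 a1 b1 ++ v ++ alpha t2 a2 b2 ++ w))%:Z -
  (wsum f (u ++ alpha t1 b1 a1 ++ v ++ alpha t2 b2 a2 ++ w))%:Z =
  (a1%:Z - b1%:Z) * altsum (fun k => f (size u + k)%N) t1 +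
  (a2%:Z - b2%:Z) * altsum (fun k => f (size u + t1 + size v + k)%N) t2.
Proof.
have -> : altsum (fun k => f (size u + t1 + size v + k)%N) t2 =
          altsum (fun k => f (size u + (t1 + (size v + k)))%N) t2.
  by apply: eq_bigr => k _; rewrite !addnA.
rewrite -!wsum_alpha_sub !wsum_cat !size_alpha !PoszD; ring.
Qed.

Lemma altsum_pow0 s t : altsum (fun k => (s + k).+1 ^ 0)%N t = (odd t)%:Z.
Proof.
elim: t => [|t IHt]; first exact: big_ord0.
by rewrite altsumS IHt expn0 -signr_odd /=; case: (odd t) => /=; lia.
Qed.

Lemma altsum_even_weight s j :
  altsum (fun k => ~~ odd (s + k)) (2 * j) = (-1) ^+ s * j%:Z.
Proof.
elim: j => [|j IHj]; first by rewrite muln0 mulr0; exact: big_ord0.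
rewrite altsum_double IHj !oddD oddS oddM -signr_odd.
by case: (odd s) => /=; lia.
Qed.

Lemma altsum_even_weight_odd s j :
  altsum (fun k => ~~ odd (s + k)) (2 * j).+1 = (-1) ^+ s * j%:Z + (~~ odd s)%:Z.
Proof. by rewrite altsum_odd altsum_even_weight oddD oddM andFb addbF. Qed.

Lemma altsum_sq s j :
  altsum (fun k => (s + k).+1 ^ 2)%N (2 * j) = - (j%:Z * (2 * s%:Z + 2 * j%:Z + 1)).
Proof.
elim: j => [|j IHj]; first by rewrite mul0r oppr0; exact: big_ord0.
by rewrite altsum_double IHj; lia.
Qed.

Lemma altsum_sq_odd s j :
  altsum (fun k => (s + k).+1 ^ 2)%N (2 * j).+1 =
  - (j%:Z * (2 * s%:Z + 2 * j%:Z + 1)) + (s%:Z + 2 * j%:Z + 1) ^+ 2.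
Proof. by rewrite altsum_odd altsum_sq; lia. Qed.

End AlternatingSums.

(** * Two flipped blocks violate the congruences *)

Section SmallDivisors.
Local Open Scope ring_scope.

Lemma dvdz_small (m : nat) (z : int) : (`|z| < m)%N -> (m %| z)%Z = (z == 0).
Proof.
move=> z_lt; apply/idP/eqP => [/dvdn_leq le_m | ->]; last exact: dvdz0.
by apply/eqP; rewrite -absz_eq0 -leqn0 leqNgt; apply/negP => /le_m; lia.
Qed.

Lemma absz_sub_bound q a b :
  (a < q)%N -> (b < q)%N -> a != b -> (0 < `|a%:Z - b%:Z| < q)%N.
Proof.
move=> a_lt b_lt a_neq_b.
by have [a_le | /ltnW b_le] := leqP a b; [rewrite distnEr | rewrite distnEl]; lia.
Qed.

Lemma Euclid_dvdzM p (a b : int) : prime p -> (p %| a * b)%Z = (p %| a)%Z || (p %| b)%Z.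
Proof. by move=> p_pr; rewrite !dvdzE abszM Euclid_dvdM. Qed.

Lemma prime_ndvdz_mul3 p (a b c : int) : prime p ->
  (0 < `|a| < p)%N -> (0 < `|b| < p)%N -> (0 < `|c| < p)%N -> ~~ (p %| a * b * c)%Z.
Proof.
move=> p_pr /andP [a_gt0 a_lt] /andP [b_gt0 b_lt] /andP [c_gt0 c_lt].
by rewrite !Euclid_dvdzM // !dvdz_small // -!absz_eq0; lia.
Qed.

Lemma eqn_mod_dvdz (a b d m : nat) :
  a == d %[mod m] -> b == d %[mod m] -> (m %| a%:Z - b%:Z)%Z.
Proof. by move=> /eqP a_mod /eqP b_mod; rewrite -eqz_mod_dvd !modz_nat a_mod b_mod. Qed.

End SmallDivisors.

Section TwoFlips.
Import ring.
Local Open Scope ring_scope.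

Variables (q n p L s1 s2 t1 t2 : nat) (e1 e2 : int).
Hypotheses (p_pr : prime p) (n4_lt_p : (4 * n < p)%N) (q_le_p : (q <= p)%N).
Hypotheses (e1_bnd : (0 < `|e1| < q)%N) (e2_bnd : (0 < `|e2| < q)%N).
Hypotheses (t1_gt0 : (0 < t1)%N) (t2_gt0 : (0 < t2)%N).
Hypotheses (t1_le : (t1 <= L)%N) (t2_le : (t2 <= L)%N).
Hypotheses (blocks_apart : (s1 + t1 < s2)%N) (s2_le : (s2 + t2 <= n)%N).

Lemma flips_parity :
  ((2 * q - 1)%N %| e1 * (odd t1)%:Z + e2 * (odd t2)%:Z)%Z ->
  odd t1 = odd t2 /\ (odd t1 -> e2 = - e1).
Proof.
rewrite dvdz_small; last by case: (odd t1); case: (odd t2); lia.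
by case: (odd t1); case: (odd t2) => /eqP /=; lia.
Qed.

Lemma flips_even_contra j1 j2 : t1 = (2 * j1)%N -> t2 = (2 * j2)%N ->
  (((q - 1) * L).+1 %| e1 * ((-1) ^+ s1 * j1%:Z) + e2 * ((-1) ^+ s2 * j2%:Z))%Z ->
  ~~ (p %| e1 * - (j1%:Z * (2 * s1%:Z + 2 * j1%:Z + 1)) +
           e2 * - (j2%:Z * (2 * s2%:Z + 2 * j2%:Z + 1)))%Z.
Proof.
move=> t1E t2E dvd_VTO.
have e1j1_le : (`|(e1 * j1%:Z)%R| <= (q - 1) * j1)%N by rewrite abszM leq_mul2r; lia.
have e2j2_le : (`|(e2 * j2%:Z)%R| <= (q - 1) * j2)%N by rewrite abszM leq_mul2r; lia.
have j12_le : ((q - 1) * j1 + (q - 1) * j2 <= (q - 1) * L)%N.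
  by rewrite -mulnDr leq_mul2l; lia.
have [sg sg_sign e2j2E] :
    exists2 sg : int, (sg == 1) || (sg == -1) & e2 * j2%:Z = sg * (e1 * j1%:Z).
  move: dvd_VTO; rewrite -(signr_odd _ s1) -(signr_odd _ s2).
  case: (odd s1); case: (odd s2); rewrite /= ?mul1r ?mulN1r ?mulrN dvdz_small;
    try lia; move=> /eqP sum0; [exists (-1) | exists 1 | exists 1 | exists (-1)]; lia.
set c1 := 2 * s1%:Z + 2 * j1%:Z + 1; set c2 := 2 * s2%:Z + 2 * j2%:Z + 1.
have -> : e1 * - (j1%:Z * c1) + e2 * - (j2%:Z * c2) = e1 * j1%:Z * - (c1 + sg * c2).
  have -> : e2 * - (j2%:Z * c2) = - (e2 * j2%:Z) * c2 by ring.
  by rewrite e2j2E; ring.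
apply: prime_ndvdz_mul3; [done | lia | lia | by case/orP: sg_sign => /eqP ->; rewrite /c1 /c2; lia].
Qed.

Lemma flips_odd_contra j1 j2 : t1 = (2 * j1).+1 -> t2 = (2 * j2).+1 -> e2 = - e1 ->
  (((q - 1) * L).+1 %| e1 * ((-1) ^+ s1 * j1%:Z + (~~ odd s1)%:Z) +
                       e2 * ((-1) ^+ s2 * j2%:Z + (~~ odd s2)%:Z))%Z ->
  ~~ (p %| e1 * (- (j1%:Z * (2 * s1%:Z + 2 * j1%:Z + 1)) + (s1%:Z + 2 * j1%:Z + 1) ^+ 2) +
           e2 * (- (j2%:Z * (2 * s2%:Z + 2 * j2%:Z + 1)) + (s2%:Z + 2 * j2%:Z + 1) ^+ 2))%Z.
Proof.
move=> t1E t2E -> dvd_VTO.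
have j_eq : j1 = j2.
  move: dvd_VTO; rewrite mulNr -mulrBr -(signr_odd _ s1) -(signr_odd _ s2).
  case: (odd s1); case: (odd s2); rewrite /= ?mul1r ?mulN1r dvdz_small ?mulf_eq0;
    try (by rewrite abszM ltnS; apply: leq_mul; lia); lia.
subst j2.
have -> : e1 * (- (j1%:Z * (2 * s1%:Z + 2 * j1%:Z + 1)) + (s1%:Z + 2 * j1%:Z + 1) ^+ 2) +
          - e1 * (- (j1%:Z * (2 * s2%:Z + 2 * j1%:Z + 1)) + (s2%:Z + 2 * j1%:Z + 1) ^+ 2) =
          e1 * (s1%:Z - s2%:Z) * (s1%:Z + s2%:Z + 2 * j1%:Z + 2) by ring.
by apply: prime_ndvdz_mul3; [done | lia | lia | lia].
Qed.

Lemma flips_contra :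
  ((2 * q - 1)%N %| e1 * altsum (fun k => (s1 + k).+1 ^ 0)%N t1 +
                    e2 * altsum (fun k => (s2 + k).+1 ^ 0)%N t2)%Z ->
  (((q - 1) * L).+1 %| e1 * altsum (fun k => ~~ odd (s1 + k)) t1 +
                       e2 * altsum (fun k => ~~ odd (s2 + k)) t2)%Z ->
  ~~ (p %| e1 * altsum (fun k => (s1 + k).+1 ^ 2)%N t1 +
           e2 * altsum (fun k => (s2 + k).+1 ^ 2)%N t2)%Z.
Proof.
rewrite !altsum_pow0 => /flips_parity [same_parity e2E].
case: (boolP (odd t1)) => [odd_t1 | even_t1].
  have t1E : t1 = (2 * t1./2).+1 by rewrite -{1}(odd_double_half t1) odd_t1 mul2n.
  have t2E : t2 = (2 * t2./2).+1.
    by rewrite -{1}(odd_double_half t2) -same_parity odd_t1 mul2n.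
  rewrite t1E t2E !altsum_even_weight_odd !altsum_sq_odd.
  exact: flips_odd_contra (e2E odd_t1).
have t1E : t1 = (2 * t1./2)%N by rewrite -{1}(odd_double_half t1) (negbTE even_t1) mul2n.
have t2E : t2 = (2 * t2./2)%N.
  by rewrite -{1}(odd_double_half t2) -same_parity (negbTE even_t1) mul2n.
rewrite t1E t2E !altsum_even_weight !altsum_sq.
exact: flips_even_contra.
Qed.

End TwoFlips.

Section Logarithms.
Local Open Scope R_scope.

Lemma ln_le x y : 0 < x -> x <= y -> ln x <= ln y.
Proof.
move=> x_gt0 /Rle_lt_or_eq_dec [x_lt_y | <-]; last exact: Rle_refl.
exact/Rlt_le/ln_increasing.
Qed.

Lemma ln_nonpos x : x <= 1 -> ln x <= 0.
Proof.
move=> x_le1; case: (Rle_lt_dec x 0) => [x_le0 | x_gt0]; last by rewrite -ln_1; apply: ln_le.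
by rewrite /ln; case: (Rlt_dec 0 x) => [x_gt0 | _]; [exfalso; lra | exact: Rle_refl].
Qed.

Lemma ln_lt_id x : 0 < x -> ln x < x.
Proof.
move=> x_gt0; rewrite -{2}(ln_exp x); apply: ln_increasing => //.
by have := exp_ineq1 x; lra.
Qed.

Lemma ln_le_inv x y : 0 < x -> 0 < y -> ln x <= ln y -> x <= y.
Proof. by move=> x_gt0 y_gt0 ln_le_xy; apply: Rnot_lt_le => /(ln_increasing _ _ y_gt0); lra. Qed.

Lemma ln_INR_gt0 q : (1 < q)%N -> 0 < ln (INR q).
Proof.
by move=> q_gt1; rewrite -ln_1; apply: ln_increasing; [lra | apply: (lt_INR 1); apply/ltP].
Qed.

Lemma INR_expn m k : INR (m ^ k) = INR m ^ k.
Proof. by elim: k => [|k IHk] //; rewrite expnS mult_INR IHk. Qed.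

Lemma INR_leq m k : (m <= k)%N -> INR m <= INR k.
Proof. by move/leP; apply: le_INR. Qed.

Lemma logqK q x : (1 < q)%N -> logq q x * ln (INR q) = ln x.
Proof. by move=> /ln_INR_gt0 lnq_gt0; rewrite /logq; field; lra. Qed.

Lemma logqM q x y : 0 < x -> 0 < y -> logq q (x * y) = logq q x + logq q y.
Proof. by move=> x_gt0 y_gt0; rewrite /logq ln_mult // /Rdiv Rmult_plus_distr_r. Qed.

Lemma logq_nonpos q x : (1 < q)%N -> x <= 1 -> logq q x <= 0.
Proof.
move=> q_gt1 /ln_nonpos; rewrite -(logqK x q_gt1).
have := ln_INR_gt0 q_gt1; nra.
Qed.

Lemma logq_le1 q x : (1 < q)%N -> 0 < x <= INR q -> logq q x <= 1.
Proof.
move=> q_gt1 [x_gt0 /(ln_le x_gt0)]; rewrite -(logqK x q_gt1).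
have := ln_INR_gt0 q_gt1; nra.
Qed.

Lemma ceilZ_spec x : x <= IZR (ceilZ x) < x + 1.
Proof. rewrite /ceilZ opp_IZR; have [lo hi] := base_Int_part (- x); lra. Qed.

Lemma Lpar_le1 q n : (2 <= q)%N -> (0 < n <= q)%N -> (Lpar q n <= 1)%N.
Proof.
move=> q_ge2 /andP [n_gt0 n_le].
have logn_le1 : logq q (INR n) <= 1.
  by apply: logq_le1 => //; split; [apply: (lt_INR 0) | apply: le_INR]; apply/leP.
have := logq_nonpos q_ge2 logn_le1.
have [ceil_ge ceil_lt] := ceilZ_spec (logq q (INR n) + logq q (logq q (INR n))).
rewrite /Lpar => loglog_le0.
have : Z.lt (ceilZ (logq q (INR n) + logq q (logq q (INR n)))) 2.
  by apply: lt_IZR; lra.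
lia.
Qed.

End Logarithms.

Lemma is_alt_alpha q t a b : a < q -> b < q -> a != b -> is_alt q (alpha t a b).
Proof.
move=> a_lt b_lt a_neq_b; apply/hasP; exists a; first by rewrite mem_iota.
by apply/hasP; exists b; rewrite ?mem_iota // a_neq_b size_alpha eqxx.
Qed.

Lemma inALL_alt_le q n L x s t a b r : inALL q n L x -> x = s ++ alpha t a b ++ r ->
  a < q -> b < q -> a != b -> t <= L.
Proof.
move=> /and3P [_ _ /allP altL] xE a_lt b_lt a_neq_b.
have size_x : size x = size s + t + size r by rewrite xE !size_cat size_alpha addnA.
have s_in : size s \in iota 0 (size x).+1 by rewrite mem_iota; lia.
have st_in : size s + t \in iota 0 (size x).+1 by rewrite mem_iota; lia.
move: (allP (altL _ s_in) _ st_in).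
rewrite xE catA take_size_cat ?size_cat ?size_alpha // drop_size_cat //.
by rewrite is_alt_alpha //= addKn.
Qed.

(* The last symbol of the first block differs in x and y, so in one of them it differs
   from the symbol that follows the block. *)
Lemma flip_Lpar_ge2 q n L u t a b c r r' :
  inALL q n L (u ++ alpha t a b ++ c :: r) -> inALL q n L (u ++ alpha t b a ++ c :: r') ->
  0 < t -> a < q -> b < q -> c < q -> a != b -> 2 <= L.
Proof.
case: t => // t xA yA _ a_lt b_lt c_lt a_neq_b.
have blockE d d' s : u ++ alpha t.+1 d d' ++ c :: s =
                     (u ++ alpha t d d') ++ alpha 2 (if odd t then d' else d) c ++ s.
  by rewrite /alpha mkseqS -cats1 -!catA.
have [last_eq | last_neq] := eqVneq (if odd t then b else a) c.
  apply: (inALL_alt_le yA (blockE b a r')) => //; first by case: (odd t).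
  by rewrite -last_eq; case: (odd t); rewrite // eq_sym.
by apply: (inALL_alt_le xA (blockE a b r)) => //; case: (odd t).
Qed.

Lemma VT_wsum k z : VT k z = wsum (fun i => i.+1 ^ k) z.
Proof. by []. Qed.

Lemma C2Aux_no_flip_pair q n p d1 d2 d3 u v w t1 t2 a1 b1 a2 b2 :
  2 <= q -> 0 < n -> prime p -> 4 * n < p ->
  inC2Aux q n p d1 d2 d3 (u ++ alpha t1 a1 b1 ++ v ++ alpha t2 a2 b2 ++ w) ->
  inC2Aux q n p d1 d2 d3 (u ++ alpha t1 b1 a1 ++ v ++ alpha t2 b2 a2 ++ w) ->
  qary q v -> 0 < size v -> 0 < t1 -> 0 < t2 ->
  a1 < q -> b1 < q -> a2 < q -> b2 < q -> a1 != b1 -> a2 != b2 -> False.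
Proof.
move=> q_ge2 n_gt0 p_pr n4_lt_p /and4P [xA x0 x2 xO] /and4P [yA y0 y2 yO] v_q v_gt0
  t1_gt0 t2_gt0 a1_lt b1_lt a2_lt b2_lt a1_neq_b1 a2_neq_b2.
set L := Lpar q n in xA yA xO yO.
have t1_le : t1 <= L := inALL_alt_le xA (erefl _) a1_lt b1_lt a1_neq_b1.
have t2_le : t2 <= L.
  apply: (inALL_alt_le (s := u ++ alpha t1 a1 b1 ++ v) (r := w) xA _ a2_lt b2_lt a2_neq_b2).
  by rewrite -!catA.
have L_ge2 : 2 <= L.
  case: v v_q v_gt0 xA yA {x0 x2 xO y0 y2 yO} => // c r /andP [c_lt _] _ xA yA.
  rewrite cat_cons in xA; rewrite cat_cons in yA.
  exact: flip_Lpar_ge2 xA yA t1_gt0 a1_lt b1_lt c_lt a1_neq_b1.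
have q_lt_n : q < n.
  rewrite ltnNge; apply/negP => n_le_q.
  by have := Lpar_le1 q_ge2 (introT andP (conj n_gt0 n_le_q)); rewrite -/L leqNgt L_ge2.
have q_le_p : q <= p.
  exact: ltnW (leq_trans q_lt_n (leq_trans (leq_pmull n (isT : 0 < 4)) (ltnW n4_lt_p))).
have blocks_apart : size u + t1 < size u + t1 + size v by rewrite -[X in X < _]addn0 ltn_add2l.
have s2_le : size u + t1 + size v + t2 <= n.
  by move: xA => /and3P [/eqP <- _ _]; rewrite !size_cat !size_alpha !addnA leq_addr.
have dvd_VT0 := eqn_mod_dvdz x0 y0; rewrite !VT_wsum wsum_flips_sub in dvd_VT0.
have dvd_VTO := eqn_mod_dvdz xO yO; rewrite !VT_oddseq wsum_flips_sub in dvd_VTO.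
have dvd_VT2 := eqn_mod_dvdz x2 y2; rewrite !VT_wsum wsum_flips_sub in dvd_VT2.
have := flips_contra p_pr n4_lt_p q_le_p (absz_sub_bound a1_lt b1_lt a1_neq_b1)
  (absz_sub_bound a2_lt b2_lt a2_neq_b2) t1_gt0 t2_gt0 t1_le t2_le blocks_apart s2_le
  dvd_VT0 dvd_VTO.
by rewrite dvd_VT2.
Qed.

(** * Counting words of ALL(n, L) *)

Lemma sub_in_count (T : eqType) (a1 a2 : pred T) s :
  {in s, subpred a1 a2} -> count a1 s <= count a2 s.
Proof.
elim: s => //= x s IHs sub12; apply: leq_add.
  by case a1x: (a1 x); rewrite // (sub12 x (mem_head x s) a1x).
by apply: IHs => y y_s; apply: sub12; rewrite inE y_s orbT.
Qed.

Lemma count_has_le (T I : Type) (Q : I -> pred T) r s :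
  count (fun x => has (Q^~ x) r) s <= \sum_(i <- r) count (Q i) s.
Proof.
elim: r => [|i r IHr] /=; first by rewrite big_nil count_pred0.
rewrite big_cons; apply: leq_trans (leq_add (leqnn _) IHr).
rewrite -count_predUI; apply: leq_trans (leq_addr _ _).
by apply: sub_count => x.
Qed.

Lemma size_words q n : size (words q n) = q ^ n.
Proof. by elim: n => //= n IHn; rewrite size_allpairs size_iota IHn expnS. Qed.

Lemma words_uniq q n : uniq (words q n).
Proof.
elim: n => //= n IHn; apply: allpairs_uniq => //; first exact: iota_uniq.
by move=> [a w] [b w'] _ _ /= [-> ->].
Qed.

Lemma mem_words q n x : x \in words q n -> size x = n /\ qary q x.
Proof.
elim: n x => [|n IHn] x /=; first by rewrite inE => /eqP ->.
case/allpairsP => [[a w] [/= a_in /IHn [size_w qary_w] ->]].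
by rewrite /= size_w /qary /= -/(qary q w) qary_w andbT; move: a_in; rewrite mem_iota.
Qed.

Lemma count_words_cons (P : pred (seq nat)) q n :
  count P (words q n.+1) = \sum_(a <- iota 0 q) count (fun w => P (a :: w)) (words q n).
Proof.
rewrite /=; elim: (iota 0 q) => [|a s IHs]; first by rewrite big_nil.
by rewrite allpairs_cons count_cat count_map big_cons IHs.
Qed.

Lemma count_words_take q (P : pred (seq nat)) m k :
  count (fun x => P (take m x)) (words q (m + k)) = q ^ k * count P (words q m).
Proof.
elim: m P => [|m IHm] P.
  rewrite add0n (eq_count (a2 := fun => P [::])) => [|x]; last by rewrite take0.
  by rewrite /= addn0 -size_words; case: (P [::]); rewrite ?count_predT ?count_pred0 ?muln1 ?muln0.
rewrite addSn !count_words_cons big_distrr /=.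
by apply: eq_bigr => a _; rewrite (IHm (fun w => P (a :: w))).
Qed.

Lemma count_words_window q (P : pred (seq nat)) i m n : i + m <= n ->
  count (fun x => P (drop i (take (i + m) x))) (words q n) = q ^ (n - m) * count P (words q m).
Proof.
move=> im_le; rewrite -(subnKC im_le); move: (n - (i + m)) => k.
rewrite (_ : i + m + k - m = i + k); last by lia.
elim: i {im_le} => [|i IHi].
  by rewrite !add0n -count_words_take; apply: eq_count => x; rewrite drop0.
rewrite !addSn count_words_cons expnS -mulnA -IHi.
transitivity (\sum_(a <- iota 0 q)
  count (fun x => P (drop i (take (i + m) x))) (words q (i + m + k))).
  by apply: eq_bigr => a _; apply: eq_count.
by rewrite big_const_seq count_predT size_iota iter_addn_0 mulnC.
Qed.

Lemma take_alpha k t a b : take k (alpha t a b) = alpha (minn k t) a b.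
Proof. by rewrite /alpha /mkseq -map_take take_iota. Qed.

Lemma is_alt_take q k s : is_alt q s -> is_alt q (take k s).
Proof.
case/hasP => a a_in /hasP [b b_in /andP [a_neq_b /eqP sE]].
apply/hasP; exists a => //; apply/hasP; exists b => //.
by rewrite a_neq_b sE take_alpha size_alpha eqxx.
Qed.

Lemma count_is_alt_le q m : count (is_alt q) (words q m) <= q * q.
Proof.
pose A := iota 0 q.
apply: (@leq_trans
  (count (fun x => has (fun a => has (fun b => x == alpha m a b) A) A) (words q m))).
  apply: sub_in_count => x /mem_words [size_x _] /hasP [a a_in /hasP [b b_in /andP [_ /eqP xE]]].
  by apply/hasP; exists a => //; apply/hasP; exists b; rewrite // xE size_x.
apply: leq_trans (count_has_le _ _ _) _.
apply: (@leq_trans (\sum_(a <- A) q)).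
  apply: leq_sum => a _; apply: leq_trans (count_has_le _ _ _) _.
  apply: (@leq_trans (\sum_(b <- A) 1)); last by rewrite sum1_size size_iota.
  apply: leq_sum => b _; rewrite (eq_count (a2 := pred1 (alpha m a b))) //.
  by rewrite count_uniq_mem ?words_uniq // leq_b1.
by rewrite big_const_seq count_predT size_iota iter_addn_0.
Qed.

Lemma not_inALL_window q n L x : x \in words q n -> ~~ inALL q n L x ->
  has (fun i => is_alt q (drop i (take (i + L.+1) x))) (iota 0 (n - L)).
Proof.
move=> /mem_words [size_x qary_x]; rewrite /inALL size_x eqxx qary_x.
case/allPn => i; rewrite mem_iota => i_lt /allPn [j]; rewrite mem_iota => j_lt.
rewrite negb_imply -ltnNge => /andP [alt_ij long_ij].
apply/hasP; exists i; first by rewrite mem_iota; lia.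
have -> : drop i (take (i + L.+1) x) = take L.+1 (drop i (take j x)).
  by rewrite take_drop take_takel; [congr (drop _ (take _ _)); lia | lia].
exact: is_alt_take.
Qed.

Lemma count_inALL_ge q n L :
  q ^ n <= count (inALL q n L) (words q n) + (n - L) * (q ^ (n - L.+1) * (q * q)).
Proof.
rewrite -[X in X <= _](size_words q n) -(count_predC (inALL q n L)) leq_add2l.
apply: (@leq_trans (count (fun x => has (fun i => is_alt q (drop i (take (i + L.+1) x)))
                                       (iota 0 (n - L))) (words q n))).
  by apply: sub_in_count => x x_in /= /(not_inALL_window x_in).
apply: leq_trans (count_has_le _ _ _) _.
rewrite -[n - L in X in _ <= X](size_iota 0) -sum1_size big_distrl /= big_seq [X in _ <= X]big_seq.
apply: leq_sum => i; rewrite mem_iota mul1n => /andP [_ i_lt].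
by rewrite count_words_window ?leq_mul2l ?count_is_alt_le ?orbT //; lia.
Qed.

Lemma count_inALL_half q n L : 0 < q -> 2 * n * q <= q ^ L ->
  q ^ n <= 2 * count (inALL q n L) (words q n).
Proof.
move=> q_gt0 nq_le; have := count_inALL_ge q n L.
case: (leqP n L) => [n_le | L_lt n_gt].
  by rewrite (_ : n - L = 0) ?mul0n ?addn0; [lia | apply/eqP; rewrite subn_eq0].
have split_qn : q ^ n = q ^ L * q ^ (n - L) by rewrite -expnD subnKC // ltnW.
have expE : q ^ (n - L.+1) * (q * q) = q ^ (n - L) * q.
  by rewrite mulnA -!expnSr; congr (_ ^ _); lia.
rewrite expE split_qn in n_gt *.
have : 2 * n * q * q ^ (n - L) <= q ^ L * q ^ (n - L) by rewrite leq_mul2r nq_le orbT.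
nia.
Qed.

Lemma sum_le_card_mul_max (I : finType) (F : I -> nat) :
  0 < #|I| -> exists i, \sum_j F j <= #|I| * F i.
Proof.
move=> I_gt0; have [i maxE] := eq_bigmax F I_gt0.
by exists i; rewrite -maxE -sum_nat_const; apply: leq_sum => j _; apply: leq_bigmax.
Qed.

Lemma sum_count_mod (T : Type) (P : pred T) (g : T -> nat) m s : 0 < m ->
  \sum_(d < m) count (fun x => P x && (g x == d %[mod m])) s = count P s.
Proof.
move=> m_gt0; elim: s => [|x s IHs] /=; first by rewrite big1.
rewrite big_split /= IHs; congr (_ + _).
case: (P x) => /=; last by rewrite big1.
pose r := Ordinal (ltn_pmod (g x) m_gt0).
rewrite (bigD1 r) //= modn_mod eqxx big1 // => d d_neq_r.
apply/eqP; rewrite eqb0; apply: contra d_neq_r => /eqP gE.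
by apply/eqP/val_inj; rewrite /= gE modn_small.
Qed.

Lemma exists_count_mod_ge (T : Type) (P : pred T) (g : T -> nat) m s : 0 < m ->
  exists2 d, d < m & count P s <= m * count (fun x => P x && (g x == d %[mod m])) s.
Proof.
move=> m_gt0; pose F (d : 'I_m) := count (fun x => P x && (g x == d %[mod m])) s.
have [d] : exists d, \sum_j F j <= #|'I_m| * F d by apply: sum_le_card_mul_max; rewrite card_ord.
by rewrite card_ord sum_count_mod // => d_max; exists d.
Qed.

Lemma C2Aux_pigeonhole q n p : 0 < q -> 0 < p ->
  exists d1 d2 d3, [/\ d1 < 2 * q - 1, d2 < p, d3 < ((q - 1) * Lpar q n).+1 &
    count (inALL q n (Lpar q n)) (words q n) <=
    (2 * q - 1) * p * ((q - 1) * Lpar q n).+1 * cardC2Aux q n p d1 d2 d3].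
Proof.
move=> q_gt0 p_gt0.
set L := Lpar q n; set M := ((q - 1) * L).+1.
have m_gt0 : 0 < 2 * q - 1 by lia.
have [d1 d1_lt le1] := exists_count_mod_ge (inALL q n L) (VT 0) (words q n) m_gt0.
have [d2 d2_lt le2] := exists_count_mod_ge
  (fun x => inALL q n L x && (VT 0 x == d1 %[mod 2 * q - 1])) (VT 2) (words q n) p_gt0.
have [d3 d3_lt le3] := exists_count_mod_ge
  (fun x => inALL q n L x && (VT 0 x == d1 %[mod 2 * q - 1]) && (VT 2 x == d2 %[mod p]))
  (fun x => VT 0 (oddseq x)) (words q n) (ltn0Sn ((q - 1) * L)).
exists d1, d2, d3; split => //.
have cardE : cardC2Aux q n p d1 d2 d3 = count (fun x =>
    inALL q n L x && (VT 0 x == d1 %[mod 2 * q - 1]) && (VT 2 x == d2 %[mod p]) &&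
    (VT 0 (oddseq x) == d3 %[mod M])) (words q n).
  by rewrite /cardC2Aux size_filter; apply: eq_count => x; rewrite /inC2Aux !andbA.
rewrite cardE.
apply: (leq_trans le1); rewrite -!mulnA leq_mul2l (leq_trans le2) ?orbT //.
by rewrite leq_mul2l le3 orbT.
Qed.

(** * A prime in (4n, 18n] *)

Lemma prime_dvd_fact p j : prime p -> (p %| j`!) = (p <= j).
Proof.
move=> p_pr; apply/idP/idP => [|p_le]; last by rewrite dvdn_fact // prime_gt0.
elim: j => [|j IHj]; first by rewrite dvdn1 => /eqP p1; rewrite p1 in p_pr.
by rewrite factS Euclid_dvdM // => /orP [/dvdn_leq -> // | /IHj /leqW].
Qed.

Lemma sum_nat_leq_count t N : \sum_(1 <= k < N.+1) (k <= t) = minn N t.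
Proof.
elim: N => [|N IHN]; first by rewrite big_geq // min0n.
rewrite big_nat_recr //= IHN; case: (leqP N.+1 t) => [lt_Nt | le_tN].
  by rewrite (minn_idPl (ltnW lt_Nt)) addn1.
by rewrite (minn_idPr (le_tN : t <= N)) addn0.
Qed.

Lemma logn_fact_double p m : prime p ->
  logn p m`! = \sum_(1 <= k < (m.*2).+1) m %/ p ^ k.
Proof.
move=> p_pr; rewrite logn_fact // [RHS](big_cat_nat (n := m.+1)) //=; last first.
  by rewrite ltnS -addnn leq_addr.
rewrite [X in _ = _ + X]big1_seq ?addn0 // => k /andP [_]; rewrite mem_index_iota => /andP [m_lt _].
by apply: divn_small; apply: leq_trans m_lt _; apply/ltnW/ltn_expl/prime_gt1.
Qed.

(* Legendre: each k <= trunc_log contributes at most 1 to the valuation of (2m)! / (m!)^2. *)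
Lemma logn_central_binom p m : prime p -> 0 < m ->
  logn p 'C(m.*2, m) <= trunc_log p m.*2.
Proof.
move=> p_pr m_gt0; set t := trunc_log p m.*2; have p_gt1 := prime_gt1 p_pr.
have factE := bin_fact (leq_addr m m); rewrite addnK addnn in factE.
have lognE : logn p (m.*2)`! = logn p 'C(m.*2, m) + (logn p m`! + logn p m`!).
  have C_gt0 : 0 < 'C(m.*2, m) by rewrite bin_gt0 -addnn leq_addr.
  by rewrite -factE !lognM ?C_gt0 ?muln_gt0 ?fact_gt0.
suff : logn p (m.*2)`! <= (logn p m`! + logn p m`!) + t by lia.
rewrite logn_fact // logn_fact_double //.
apply: (@leq_trans (\sum_(1 <= k < (m.*2).+1) (2 * (m %/ p ^ k) + (k <= t)))).
  apply: leq_sum => k _; case: (leqP k t) => [k_le | t_lt] /=.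
    by rewrite mul2n -!addnn; exact: leq_divDl.
  rewrite addn0 divn_small //; apply: leq_trans (trunc_log_ltn _ p_gt1) _.
  by rewrite leq_exp2l.
rewrite big_split /= sum_nat_leq_count -big_distrr /=.
have := geq_minr m.*2 t; lia.
Qed.

Lemma pfactor_central_binom_le p m : prime p -> 0 < m -> p ^ logn p 'C(m.*2, m) <= m.*2.
Proof.
move=> p_pr m_gt0; apply: leq_trans (trunc_logP (prime_gt1 p_pr) _); last by lia.
by rewrite leq_exp2l ?prime_gt1 // logn_central_binom.
Qed.

Lemma logn_central_binom_le1 p m : prime p -> 0 < m -> m.*2 < p * p ->
  logn p 'C(m.*2, m) <= 1.
Proof.
move=> p_pr m_gt0 m_lt; apply: leq_trans (logn_central_binom p_pr m_gt0) _.
have p_gt1 := prime_gt1 p_pr; rewrite leqNgt; apply/negP => log_gt1.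
have : p ^ 2 <= m.*2 by apply: leq_trans (trunc_logP p_gt1 _); [rewrite leq_exp2l | lia].
rewrite -mulnn; lia.
Qed.

Lemma central_binom_ge m : 2 ^ m <= 'C(m.*2, m).
Proof.
elim: m => [|m IHm] //.
have diagE := mul_bin_diag (m.+1).*2 m; rewrite doubleS /= in diagE.
have le_C : 2 ^ m <= 'C(m.*2.+1, m) := leq_trans IHm (leq_bin2l _ (leqnSn _)).
rewrite doubleS expnS -(leq_pmul2l (ltn0Sn m)) -diagE.
rewrite (_ : m.*2.+2 = m.+1 * 2); last by rewrite -doubleS -muln2.
by rewrite -mulnA leq_mul2l leq_mul2l le_C !orbT.
Qed.

Lemma prod_pfactor_le C a N : 0 < C -> \prod_(a <= p < N) p ^ logn p C <= C.
Proof.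
move=> C_gt0; apply: (@leq_trans (\prod_(0 <= p < N) p ^ logn p C)).
  have [a_le | N_lt] := leqP a N; last first.
    by rewrite big_geq ?(ltnW N_lt) // prodn_gt0 // => p; rewrite pfactor_gt0.
  rewrite [X in _ <= X](big_cat_nat (n := a)) //=.
  by rewrite leq_pmull // prodn_gt0 // => p; rewrite pfactor_gt0.
have CE : C = \prod_(0 <= p < C.+1) p ^ logn p C.
  by rewrite -{1}(partnT C_gt0) /partn; apply: eq_bigl => p; rewrite inE.
have [N_le | C_lt] := leqP N C.+1.
  rewrite [X in _ <= X]CE [X in _ <= X](big_cat_nat (n := N)) //=.
  by rewrite leq_pmulr // prodn_gt0 // => p; rewrite pfactor_gt0.
rewrite (big_cat_nat (n := C.+1)) //= -?CE; last exact: ltnW.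
rewrite [X in _ * X]big1_seq ?muln1 // => p.
rewrite mem_index_iota => /andP [_ /andP [C_lt_p _]].
rewrite (_ : logn p C = 0) //; apply/eqP; rewrite -leqn0 leqNgt logn_gt0 mem_primes.
by apply/negP => /and3P [_ _ /(dvdn_leq C_gt0)]; lia.
Qed.

Lemma prod_prime_divisors_le C (P : pred nat) a N : 0 < C ->
  (forall p, a <= p < N -> P p -> prime p && (p %| C)) ->
  \prod_(a <= p < N) (if P p then p else 1) <= C.
Proof.
move=> C_gt0 P_dvd; apply: leq_trans (prod_pfactor_le a N C_gt0).
rewrite big_seq [X in _ <= X]big_seq; apply: leq_prod => p; rewrite mem_index_iota => p_in.
case: ifP => [/(P_dvd p p_in) /andP [p_pr p_dvd] | _]; last exact: pfactor_gt0.
by rewrite -{1}(expn1 p) leq_pexp2l ?(prime_gt0 p_pr) // logn_gt0 mem_primes p_pr C_gt0.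
Qed.

Lemma prod_nat_cut_le (f : nat -> nat) K N :
  (forall p, K < p -> f p = 1) -> (forall p, 0 < f p) ->
  \prod_(0 <= p < N) f p <= \prod_(0 <= p < K.+1) f p.
Proof.
move=> f1 f_gt0; have [N_le | K_lt] := leqP N K.+1.
  by rewrite [X in _ <= X](big_cat_nat (n := N)) //= leq_pmulr // prodn_gt0.
rewrite (big_cat_nat (n := K.+1)) //=; last exact: ltnW.
rewrite [X in _ * X]big1_seq ?muln1 // => p.
by rewrite mem_index_iota => /andP [_ /andP [K_lt_p _]]; apply: f1.
Qed.

Lemma prod_nat_if_lt (c s N : nat) :
  \prod_(0 <= p < N) (if p < s then c else 1) = c ^ minn N s.
Proof.
elim: N => [|N IHN]; first by rewrite big_geq // min0n.
rewrite big_nat_recr // IHN /=; case: (ltnP N s) => [N_lt | s_le].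
  by rewrite (minn_idPl N_lt) expnSr.
by rewrite (minn_idPr (leqW s_le)) muln1.
Qed.

Definition primorial N := \prod_(0 <= p < N.+1) (if prime p then p else 1).

Lemma central_binom_odd_le k : 'C(2 * k + 1, k) <= 4 ^ k.
Proof.
set n := 2 * k + 1.
have k_lt : k < n.+1 by lia.
have k1_lt : k.+1 < n.+1 by lia.
have two_terms : 'C(n, k) + 'C(n, k.+1) <= 2 ^ n.
  rewrite -(add1n 1) expnDn (bigD1 (Ordinal k_lt)) //= (bigD1 (Ordinal k1_lt)) /=; last first.
    by apply/eqP => /(congr1 val) /=; lia.
  by rewrite !exp1n !muln1 addnA leq_addr.
have symE : 'C(n, k.+1) = 'C(n, k) by rewrite -bin_sub /n; [congr 'C(_, _); lia | lia].
have expE : 2 ^ n = 2 * 4 ^ k by rewrite /n addn1 expnS expnM.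
by rewrite symE addnn -mul2n expE leq_pmul2l in two_terms.
Qed.

Lemma prime_dvd_central_binom_odd p k : prime p -> k.+1 < p <= 2 * k + 1 ->
  p %| 'C(2 * k + 1, k).
Proof.
move=> p_pr /andP [k_lt p_le].
have k_le : k <= 2 * k + 1 by lia.
have factE := bin_fact k_le; rewrite (_ : 2 * k + 1 - k = k.+1) in factE; last by lia.
have : p %| (2 * k + 1)`! by rewrite prime_dvd_fact.
rewrite -factE (@Gauss_dvdl _ _ (k`! * k.+1`!)) // prime_coprime //.
by rewrite Euclid_dvdM // !prime_dvd_fact //; lia.
Qed.

(* The primes in (k + 2, 2k + 3] divide 'C(2k + 3, k + 1) <= 4^(k + 1). *)
Lemma primorial_le N : primorial N <= 4 ^ N.
Proof.
elim/ltn_ind: N => -[|N] IHN; first by rewrite /primorial big_nat1.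
have [odd_N | even_N] := boolP (odd N).
  rewrite /primorial big_nat_recr //= -/(primorial N) expnS mulnC leq_mul ?IHN //.
  by case: ifP => // /even_prime [-> // | ]; rewrite /= odd_N.
have [k NE] : exists k, N = 2 * k.
  by exists N./2; rewrite -{1}(odd_double_half N) (negbTE even_N) mul2n.
rewrite {}NE in IHN *; case: k IHN => [_ | k IHN]; first by rewrite /primorial unlock.
rewrite /primorial (big_cat_nat (n := k.+3)) //=; last by lia.
rewrite (_ : 4 ^ (2 * k.+1).+1 = 4 ^ k.+2 * 4 ^ k.+1); last by rewrite -expnD; congr (_ ^ _); lia.
apply: leq_mul; first by apply: IHN; lia.
apply: leq_trans (central_binom_odd_le k.+1).
apply: prod_prime_divisors_le => [|p p_in p_pr]; first by rewrite bin_gt0; lia.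
by rewrite p_pr prime_dvd_central_binom_odd //; lia.
Qed.

(* Every prime factor of 'C(2m, m) is at most 4n; it contributes at most 2m to the
   product, and only itself once it is at least s. *)
Lemma central_binom_le_no_prime n m s : 0 < m ->
  (forall p, prime p -> p <= m.*2 -> p <= 4 * n) -> m.*2 < s * s ->
  'C(m.*2, m) <= (m.*2) ^ s * 4 ^ (4 * n).
Proof.
move=> m_gt0 small_primes m2_lt; set C := 'C(m.*2, m).
have C_gt0 : 0 < C by rewrite bin_gt0 -addnn leq_addr.
have factE := bin_fact (leq_addr m m); rewrite addnK addnn -/C in factE.
pose A p := if p < s then m.*2 else 1.
pose B p := if prime p && (p <= 4 * n) then p else 1.
have B_gt0 p : 0 < B p by rewrite /B; case: ifP => // /andP [/prime_gt0].
rewrite -{1}(partnT C_gt0) /partn (eq_bigl predT) => [|p]; last by rewrite inE.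
apply: (@leq_trans (\prod_(0 <= p < C.+1) (A p * B p))).
  apply: leq_prod => p _; have [-> | v_gt0] := posnP (logn p C).
    by rewrite muln_gt0 B_gt0 /A; case: ifP; lia.
  move: (v_gt0); rewrite logn_gt0 mem_primes => /and3P [p_pr _ p_dvd].
  have p_le : p <= 4 * n.
    by apply: small_primes; rewrite // -prime_dvd_fact // -factE dvdn_mulr.
  rewrite /A /B p_pr p_le; case: (ltnP p s) => [p_lt | s_le].
    by apply: leq_trans (pfactor_central_binom_le p_pr m_gt0) _; rewrite leq_pmulr ?prime_gt0.
  have v_le1 : logn p C <= 1.
    by apply: logn_central_binom_le1 => //; apply: leq_trans m2_lt (leq_mul s_le s_le).
  by rewrite /= mul1n -[X in _ <= X](expn1 p) leq_pexp2l ?(prime_gt0 p_pr).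
rewrite big_split /= prod_nat_if_lt; apply: leq_mul.
  by rewrite leq_pexp2l ?geq_minr // double_gt0.
have B_cut : \prod_(0 <= p < C.+1) B p <= \prod_(0 <= p < (4 * n).+1) B p.
  by apply: prod_nat_cut_le => // p p_gt; rewrite /B leqNgt p_gt andbF.
apply: leq_trans B_cut (leq_trans _ (primorial_le (4 * n))).
apply: eq_leq; apply: eq_big_seq => p.
by rewrite mem_index_iota /B => /andP [_ p_lt]; rewrite ltnS in p_lt; rewrite p_lt andbT.
Qed.

Lemma no_prime_pow2_le n s : 0 < n -> 18 * n < s * s ->
  (forall p, prime p -> p <= 18 * n -> p <= 4 * n) -> 2 ^ n <= (18 * n) ^ s.
Proof.
move=> n_gt0 s_gt small_primes; have mE : (9 * n).*2 = 18 * n by rewrite -mul2n mulnA.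
have := central_binom_le_no_prime (m := 9 * n) (n := n) (s := s).
rewrite mE => /(_ ltac:(lia) small_primes s_gt) C_le.
have := central_binom_ge (9 * n); rewrite mE => /leq_trans /(_ C_le).
rewrite (_ : 4 ^ (4 * n) = 2 ^ (8 * n)); last by rewrite (_ : 4 = 2 ^ 2) // -expnM mulnA.
rewrite (_ : 2 ^ (9 * n) = 2 ^ n * 2 ^ (8 * n)); last by rewrite -expnD; congr (_ ^ _); lia.
by rewrite leq_pmul2r // expn_gt0.
Qed.

Section PowerComparison.
Local Open Scope R_scope.

(* With z = (18 n)^(1/4): n ln 2 <= s ln (18 n) <= (z^2 + 1) 4 z, whereas 18 n = z^4
   and z >= 288. *)
Lemma pow_sqrt_lt_pow2 n s : (2 ^ 29 <= n)%N -> ((s - 1) * (s - 1) <= 18 * n)%N ->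
  ((18 * n) ^ s < 2 ^ n)%N.
Proof.
move=> n_ge s_le; rewrite ltnNge; apply/negP => /INR_leq; rewrite !INR_expn => pow_le.
have n_large : 536870912 <= INR n.
  have pow29 : INR 2 ^ 29 = 536870912 by rewrite /=; ring.
  by have := INR_leq n_ge; rewrite INR_expn pow29.
set N := INR (18 * n); have NE : N = 18 * INR n by rewrite /N mult_INR INR_IZR_INZ.
set y := sqrt N; set z := sqrt y.
have yy : y * y = N by apply: sqrt_sqrt; lra.
have zz : z * z = y by apply: sqrt_sqrt; apply: sqrt_pos.
have z_ge : 288 <= z.
  rewrite -(sqrt_square 288); last lra.
  apply: sqrt_le_1_alt; rewrite -(sqrt_square (288 * 288)); last lra.
  by apply: sqrt_le_1_alt; lra.
have s_le_y : INR s <= y + 1.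
  case: (posnP s) => [-> /= | s_gt0]; first by have := sqrt_pos N; rewrite -/y; lra.
  have := INR_leq s_le; rewrite !mult_INR minus_INR; last by lia.
  rewrite -/N /= => sq_le; suff : INR s - 1 <= y by lra.
  by apply: Rsqr_incr_0_var; rewrite /Rsqr ?yy //; [lra | apply: sqrt_pos].
have z_gt0 : 0 < z by lra.
have lnN : ln N = 4 * ln z.
  have zz_gt0 : 0 < z * z by nra.
  by rewrite -yy -zz (ln_mult _ _ zz_gt0 zz_gt0) (ln_mult _ _ z_gt0 z_gt0); ring.
have log_le : INR n * ln 2 <= INR s * (4 * ln z).
  rewrite -lnN -!ln_pow; [apply: ln_le => //; apply: pow_lt | lra | lra]; lra.
have ln_z := ln_lt_id z_gt0.
have lnz_ge0 : 0 <= ln z by rewrite -ln_1; apply: ln_le; lra.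
have log_le' : INR s * (4 * ln z) <= (y + 1) * (4 * z).
  by apply: Rmult_le_compat; [apply: pos_INR | lra | exact: s_le_y | lra].
have half_le : INR n * / 2 <= INR n * ln 2.
  by apply: Rmult_le_compat_l; [apply: pos_INR | have := ln_lt_2; lra].
have y_ge : y * y >= 288 * (z * y) by rewrite -{1}zz; nra.
nra.
Qed.

End PowerComparison.

Lemma prime_between n : 2 ^ 29 <= n -> exists p, [/\ prime p, 4 * n < p & p <= 18 * n].
Proof.
move=> n_ge; have n_gt0 : 0 < n by apply: leq_trans n_ge; rewrite expn_gt0.
have [/existsP [p /andP [p_pr p_gt]] | ] :=
  boolP [exists p : 'I_(18 * n).+1, prime p && (4 * n < p)].
  by exists p; split => //; rewrite -ltnS.
rewrite negb_exists => /forallP no_prime; exfalso.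
have small_primes p : prime p -> p <= 18 * n -> p <= 4 * n.
  by move=> p_pr p_le; have := no_prime (Ordinal (p_le : p < (18 * n).+1)); rewrite /= p_pr -leqNgt.
have [sqrt_le sqrt_gt] := Nat.sqrt_spec' (18 * n).
have := no_prime_pow2_le (s := (Nat.sqrt (18 * n)).+1) n_gt0 ltac:(lia) small_primes.
by rewrite leqNgt pow_sqrt_lt_pow2 //; lia.
Qed.

(** * Redundancy of C^2_Aux *)

Section LparAsymptotics.
Local Open Scope R_scope.

Variables (q n : nat).
Hypotheses (q_ge2 : (2 <= q)%N) (n_ge : (q ^ (2 * q) <= n)%N).

Let rho := logq q (INR n).

Let q_ge2R : 2 <= INR q.
Proof. by have := INR_leq q_ge2; rewrite (_ : INR 2 = 2). Qed.

Let n_gt0 : 0 < INR n.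
Proof. by apply: (lt_INR 0); apply/ltP; apply: leq_trans n_ge; rewrite expn_gt0; lia. Qed.

Lemma logq_ge_2q : 2 * INR q <= rho.
Proof.
have q_gt0 : 0 < INR q by have := q_ge2R; lra.
have := INR_leq n_ge; rewrite INR_expn => /(ln_le (pow_lt _ (2 * q) q_gt0)).
rewrite ln_pow // mult_INR.
rewrite -(logqK (INR n) q_ge2) -/rho (_ : INR 2 = 2) //; have := ln_INR_gt0 q_ge2; nra.
Qed.

Lemma logq_logq_bounds : 0 <= logq q rho <= 2 * rho.
Proof.
have rho_ge1 : 1 <= rho by have := logq_ge_2q; lra.
have := logqK rho q_ge2; have := ln_lt_id (_ : 0 < rho); have := ln_INR_gt0 q_ge2.
have : 0 <= ln rho by rewrite -ln_1; apply: ln_le; lra.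
have := ln_lt_2; have : ln 2 <= ln (INR q) by apply: ln_le; lra.
nra.
Qed.

Lemma Lpar_bounds : rho + logq q rho <= INR (Lpar q n) <= 4 * rho.
Proof.
have [ceil_ge ceil_lt] := ceilZ_spec (rho + logq q rho).
have := logq_logq_bounds; have := logq_ge_2q; have := pos_INR q => *.
rewrite /Lpar -/rho INR_IZR_INZ Z2Nat.id; first lra.
by apply: le_IZR; lra.
Qed.

Lemma pow_Lpar_ge : (2 * n * q <= q ^ Lpar q n)%N.
Proof.
have q_gt0 : 0 < INR q by have := q_ge2R; lra.
have n_pos := n_gt0; have rho_gt0 : 0 < rho by have := logq_ge_2q; lra.
apply/leP/INR_le; rewrite INR_expn !mult_INR (_ : INR 2 = 2) //.
apply: Rle_trans (_ : INR n * rho <= _).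
  by have := logq_ge_2q; nra.
apply: ln_le_inv; [nra | exact: pow_lt | rewrite ln_pow // ln_mult //].
rewrite -(logqK (INR n) q_ge2) -(logqK rho q_ge2) -/rho.
have [L_ge _] := Lpar_bounds; have := ln_INR_gt0 q_ge2; nra.
Qed.

Let loss := INR (360 * q * q) * INR n * rho.

Let c_gt0 : 0 < INR (360 * q * q).
Proof. by apply: (lt_INR 0); apply/ltP; rewrite !muln_gt0; lia. Qed.

Lemma loss_gt0 : 0 < loss.
Proof.
by apply: Rmult_lt_0_compat; [exact: Rmult_lt_0_compat | have := logq_ge_2q; have := q_ge2R; lra].
Qed.

Lemma logq_loss : logq q loss = rho + logq q rho + logq q (INR (360 * q * q)).
Proof.
have rho_gt0 : 0 < rho by have := logq_ge_2q; have := q_ge2R; lra.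
have := n_gt0; have := c_gt0 => c_pos n_pos.
rewrite /loss logqM //; last exact: Rmult_lt_0_compat.
by rewrite logqM // -/rho; lra.
Qed.

Lemma code_loss_le p : (p <= 18 * n)%N ->
  INR (2 * ((2 * q - 1) * p * ((q - 1) * Lpar q n).+1)) <= loss.
Proof.
move=> p_le; have [_ L_le] := Lpar_bounds; have := logq_ge_2q => rho_ge.
have M_le : INR ((q - 1) * Lpar q n).+1 <= 5 * INR q * rho.
  rewrite -addn1 plus_INR mult_INR minus_INR /=; [nra | lia].
have INR_2q : INR (2 * q - 1) <= 2 * INR q.
  by apply: Rle_trans (INR_leq (leq_subr 1 (2 * q))) _; rewrite mult_INR /=; lra.
have INR_p : INR p <= 18 * INR n by have := INR_leq p_le; rewrite mult_INR [INR 18]INR_IZR_INZ.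
rewrite /loss !mult_INR (_ : INR 2 = 2) // (_ : INR 360 = 360); last by rewrite INR_IZR_INZ.
apply: Rle_trans (_ : 2 * (2 * INR q * (18 * INR n) * (5 * INR q * rho)) <= _); last first.
  by apply: Req_le; ring.
apply: Rmult_le_compat_l; first lra.
have := pos_INR p; have := pos_INR (2 * q - 1) => *.
by apply: Rmult_le_compat => //; [nra | apply: pos_INR | apply: Rmult_le_compat].
Qed.

End LparAsymptotics.

Lemma redundancy_le q n card (K : R) : 1 < q -> 0 < card -> Rlt 0 K ->
  Rle (INR q ^ n) (INR card * K) -> Rle (redundancy q n card) (logq q K).
Proof.
move=> q_gt1 card_gt0 K_gt0 pow_le.
have card_gt0R : Rlt 0 (INR card) by apply: (lt_INR 0); apply/ssrnat.ltP.
have q_gt0R : Rlt 0 (INR q) by apply: (lt_INR 0); apply/ssrnat.ltP; lia.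
have := ln_le (pow_lt _ n q_gt0R) pow_le; rewrite ln_pow // ln_mult //.
rewrite /redundancy -(logqK (INR card) q_gt1) -(logqK K q_gt1).
have := ln_INR_gt0 q_gt1; nra.
Qed.

Lemma C2Aux_redundancy q : 2 <= q ->
  exists (c : R) (N : nat), forall (n p : nat), N <= n -> least_prime_gt (4 * n) p ->
    exists d1 d2 d3 : nat,
      [/\ d1 <= 2 * q - 2, d2 <= p - 1, d3 <= (q - 1) * Lpar q n &
       Rle (redundancy q n (cardC2Aux q n p d1 d2 d3))
           (Rplus (Rplus (logq q (INR n)) (logq q (logq q (INR n)))) c)].
Proof.
(* From 2^29 on there is a prime in (4n, 18n], and from q^(2q) on log_q n >= 2q. *)
move=> q_ge2; exists (logq q (INR (360 * q * q))), (2 ^ 29 * q ^ (2 * q)).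
move=> n p N_le [p_pr p_gt p_min].
have n_ge29 : 2 ^ 29 <= n by apply: leq_trans N_le; rewrite leq_pmulr // expn_gt0; lia.
have n_geq : q ^ (2 * q) <= n by apply: leq_trans N_le; rewrite leq_pmull // expn_gt0.
have p_le : p <= 18 * n.
  by have [p' [p'_pr p'_gt p'_le]] := prime_between n_ge29; apply: leq_trans p'_le; apply: p_min.
have [d1 [d2 [d3 [d1_lt d2_lt d3_lt ALL_le]]]] :=
  C2Aux_pigeonhole n (ltnW q_ge2) (prime_gt0 p_pr).
exists d1, d2, d3; split; try lia.
set card := cardC2Aux q n p d1 d2 d3; set L := Lpar q n in d3_lt ALL_le *.
have pow_le : q ^ n <= card * (2 * ((2 * q - 1) * p * ((q - 1) * L).+1)).
  apply: leq_trans (count_inALL_half (ltnW q_ge2) (pow_Lpar_ge q_ge2 n_geq)) _.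
  by rewrite -/L mulnCA leq_mul2l mulnC ALL_le orbT.
have card_gt0 : 0 < card by move: pow_le; case: card => //; rewrite mul0n leqn0 expn_eq0; lia.
apply: Rle_trans (redundancy_le q_ge2 card_gt0 (loss_gt0 q_ge2 n_geq) _) _.
  rewrite -INR_expn; apply: Rle_trans (INR_leq pow_le) _; rewrite mult_INR.
  exact: Rmult_le_compat_l (pos_INR card) (code_loss_le q_ge2 n_geq p_le).
by rewrite logq_loss //; apply: Rle_refl.
Qed.

Theorem theorem13 :
  (forall (q n p d1 d2 d3 : nat),
     2 <= q -> 1 <= n -> least_prime_gt (4 * n) p ->
     d1 <= 2 * q - 2 -> d2 <= p - 1 -> d3 <= (q - 1) * Lpar q n ->
     forall x y : seq nat,
       inC2Aux q n p d1 d2 d3 x -> inC2Aux q n p d1 d2 d3 y -> x != y ->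
       dH (Rvec x) (Rvec y) = 4 ->
       ~ (exists (u v w : seq nat) (t1 t2 a1 b1 a2 b2 : nat),
            [/\ qary q u, qary q v, qary q w & 1 <= size v] /\
            [/\ 1 <= t1, 1 <= t2 & [/\ a1 < q, b1 < q, a2 < q & b2 < q]] /\
            a1 != b1 /\ a2 != b2 /\
            x = u ++ alpha t1 a1 b1 ++ v ++ alpha t2 a2 b2 ++ w /\
            y = u ++ alpha t1 b1 a1 ++ v ++ alpha t2 b2 a2 ++ w))
  /\
  (forall q : nat, 2 <= q ->
     exists (c : R) (N : nat), forall (n p : nat), N <= n ->
       least_prime_gt (4 * n) p ->
       exists d1 d2 d3 : nat,
         [/\ d1 <= 2 * q - 2, d2 <= p - 1, d3 <= (q - 1) * Lpar q n &
          Rle (redundancy q n (cardC2Aux q n p d1 d2 d3))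
             (Rplus (Rplus (logq q (INR n)) (logq q (logq q (INR n)))) c)]).
Proof.
split=> [q n p d1 d2 d3 q_ge2 n_gt0 [p_pr p_gt _] _ _ _ x y x_in y_in _ _ | q q_ge2].
  move=> [u [v [w [t1 [t2 [a1 [b1 [a2 [b2 [[_ v_q _ v_gt0]
    [[t1_gt0 t2_gt0 [a1_lt b1_lt a2_lt b2_lt]] [a1_neq_b1 [a2_neq_b2 [xE yE]]]]]]]]]]]]]].
  rewrite {}xE in x_in; rewrite {}yE in y_in.
  exact: C2Aux_no_flip_pair q_ge2 n_gt0 p_pr p_gt x_in y_in v_q v_gt0 t1_gt0 t2_gt0
    a1_lt b1_lt a2_lt b2_lt a1_neq_b1 a2_neq_b2.
exact: C2Aux_redundancy.
Qed.
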